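(* Let $Z$ be a convex subset of a real vector space $V$ and let $y\in Z$. For all $x_1,x_2\in Z$ with $x_1\leq_C y$ and $x_2\leq_C y$, and all $0\leq s\leq 1$, $$\frac{1}{t_y\big(sx_1+(1-s)x_2\big)}\leq\frac{s}{t_y(x_1)}+\frac{1-s}{t_y(x_2)}.$$
   Context: For $x,y\in Z$ write $x\leq_C y$ if there exist $z\in Z$ and $0<t\leq 1$ with $y=tx+(1-t)z$. The weight function $t_y:Z\to[0,1]$ is defined by $t_y(x)=\sup\{0\leq t<1 : \frac{y-tx}{1-t}\in Z\}$. *)

From HB Require Import structures.
From mathcomp Require Import all_boot all_order all_algebra.
From mathcomp Require Import boolp classical_sets reals.
Set Implicit Arguments. Unset Strict Implicit. Unset Printing Implicit Defensive.
Import Order.TTheory GRing.Theory Num.Theory.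
Local Open Scope ring_scope.
Local Open Scope classical_set_scope.

Definition convex_subset (R : realType) (V : lmodType R) (Z : set V) : Prop :=
  forall x y : V, Z x -> Z y -> forall s : R, 0 <= s <= 1 ->
    Z (s *: x + (1 - s) *: y).

Definition leC (R : realType) (V : lmodType R) (Z : set V) (x y : V) : Prop :=
  exists z : V, exists t : R, Z z /\ 0 < t <= 1 /\ y = t *: x + (1 - t) *: z.

Definition weight (R : realType) (V : lmodType R) (Z : set V) (y x : V) : R :=
  sup [set t : R | 0 <= t < 1 /\ Z ((1 - t)^-1 *: (y - t *: x))].

(* Writing [y = t x + (1 - t) z] with [z] in [Z], a weight [t] of [x] is a way
   of seeing [y] on the segment from [x] to a point of [Z].  Given such
   decompositions with weights [t1] for [x1] and [t2] for [x2], averaging them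
   with coefficients proportional to [s/t1] and [(1-s)/t2] decomposes [y] along
   [s x1 + (1-s) x2] with the harmonic weight [1 / (s/t1 + (1-s)/t2)], the
   remainder being a convex combination of the two points of [Z].  Hence
   [1 / t_y(s x1 + (1-s) x2) <= s/t1 + (1-s)/t2], and taking suprema over
   [t1] and [t2] gives the claim. *)
From HB Require Import structures.
From mathcomp Require Import all_boot all_order all_algebra.
From mathcomp Require Import boolp classical_sets reals.
From mathcomp Require Import ring lra.

Set Implicit Arguments.
Unset Strict Implicit.
Unset Printing Implicit Defensive.
Import Order.TTheory GRing.Theory Num.Theory.
Local Open Scope ring_scope.
Local Open Scope classical_set_scope.

Lemma le_div_sup (R : realType) (S : set R) (c d : R) :
  S !=set0 -> 0 < sup S -> 0 <= c ->
  (forall t, S t -> 0 < t -> d <= c / t) -> d <= c / sup S.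
Proof.
move=> S_neq0 sup_gt0 c_ge0 le_dct.
have [d_le0|d_gt0] := leP d 0.
  by apply: le_trans d_le0 _; rewrite divr_ge0 // ltW.
have cd_ge0 : 0 <= c / d by rewrite divr_ge0 // ltW.
suff : sup S <= c / d by rewrite !ler_pdivlMr // mulrC.
apply: ge_sup => // t St.
have [t_le0|t_gt0] := leP t 0; first exact: le_trans t_le0 cd_ge0.
by have := le_dct t St t_gt0; rewrite !ler_pdivlMr // mulrC.
Qed.

Section ConvexCombination.
Variables (R : realType) (V : lmodType R) (Z : set V).
Hypothesis convexZ : convex_subset Z.

Lemma convex_subset_wmean (p q : R) (z1 z2 : V) : 0 <= p -> 0 <= q -> 0 < p + q ->
  Z z1 -> Z z2 -> Z ((p + q)^-1 *: (p *: z1 + q *: z2)).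
Proof.
move=> p_ge0 q_ge0 pq_gt0 Zz1 Zz2.
have pq_neq0 : p + q != 0 by rewrite gt_eqF.
have -> : (p + q)^-1 *: (p *: z1 + q *: z2)
        = (p / (p + q)) *: z1 + (1 - p / (p + q)) *: z2.
  rewrite scalerDr !scalerA; congr (_ *: _ + _ *: _); first by rewrite mulrC.
  by rewrite mulrC; field.
apply: convexZ => //.
by rewrite divr_ge0 ?(ltW pq_gt0) //= ler_pdivrMr // mul1r lerDl.
Qed.

End ConvexCombination.

Lemma harmonic_gt1 (R : realFieldType) (s t1 t2 : R) : 0 <= s <= 1 ->
  0 < t1 -> t1 < 1 -> 0 < t2 -> t2 < 1 -> 1 < s / t1 + (1 - s) / t2.
Proof.
move=> /andP[s_ge0 s_le1] t1_gt0 t1_lt1 t2_gt0 t2_lt1.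
have : 1 < t1^-1 by rewrite invf_gt1.
have : 1 < t2^-1 by rewrite invf_gt1.
move: t1^-1 t2^-1 => u1 u2 u2_gt1 u1_gt1.
by case: (leP u1 u2); nra.
Qed.

Section Weight.
Variables (R : realType) (V : lmodType R) (Z : set V) (y : V).

Definition weight_set (x : V) : set R :=
  [set t | 0 <= t < 1 /\ Z ((1 - t)^-1 *: (y - t *: x))].

Lemma weight_setP (x : V) (t : R) : 0 <= t < 1 ->
  weight_set x t <-> exists2 z, Z z & y = t *: x + (1 - t) *: z.
Proof.
move=> t01; have /andP[_ t_lt1] := t01.
have t1_neq0 : 1 - t != 0 by rewrite subr_eq0 eq_sym lt_eqF.
split=> [[_ Zz]|[z Zz y_eq]].
  by exists ((1 - t)^-1 *: (y - t *: x)); rewrite // scalerA divff // scale1r addrC subrK.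
by split=> //; rewrite y_eq addrAC subrr add0r scalerA mulVf // scale1r.
Qed.

Lemma weight_set_ub (x : V) : has_ubound (weight_set x).
Proof. by exists 1 => t [/andP[_ /ltW]]. Qed.

Lemma weight_set0 (x : V) : Z y -> weight_set x 0.
Proof. by move=> Zy; rewrite /weight_set /= lexx ltr01 scale0r !subr0 invr1 scale1r. Qed.

Lemma le_weight (x : V) (t : R) : weight_set x t -> t <= weight Z y x.
Proof. exact: ub_le_sup (weight_set_ub x) t. Qed.

Lemma weight_gt0 (x : V) : Z y -> leC Z x y -> 0 < weight Z y x.
Proof.
move=> Zy [z [t [Zz [/andP[t_gt0 t_le1] y_eq]]]].
have [t_lt1|t_ge1] := ltP t 1.
  apply: (lt_le_trans t_gt0); apply: le_weight.
  by apply/weight_setP; [rewrite (ltW t_gt0) | exists z].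
have y_x : y = x.
  by rewrite y_eq (_ : t = 1) ?subrr ?scale0r ?addr0 ?scale1r //; apply/le_anti/andP.
apply: lt_le_trans (le_weight (t := 1/2) _); first by rewrite divr_gt0.
apply/weight_setP; first by apply/andP; split; lra.
by exists y => //; rewrite -{1}y_x -scalerDl (_ : 1/2 + (1 - 1/2) = 1) ?scale1r //; lra.
Qed.

Hypothesis convexZ : convex_subset Z.

Lemma harmonic_weight_set (x1 x2 : V) (s t1 t2 : R) : 0 <= s <= 1 ->
  0 < t1 -> 0 < t2 -> weight_set x1 t1 -> weight_set x2 t2 ->
  weight_set (s *: x1 + (1 - s) *: x2) (s / t1 + (1 - s) / t2)^-1.
Proof.
move=> s01 t1_gt0 t2_gt0 W1 W2; have /andP[s_ge0 s_le1] := s01.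
have [/andP[_ t1_lt1] /andP[_ t2_lt1]] := (W1.1, W2.1).
have [z1 Zz1 y_eq1] := (weight_setP _ W1.1).1 W1.
have [z2 Zz2 y_eq2] := (weight_setP _ W2.1).1 W2.
have K_gt1 := harmonic_gt1 s01 t1_gt0 t1_lt1 t2_gt0 t2_lt1.
set K := s / t1 + (1 - s) / t2 in K_gt1 *.
set t := K^-1; set a := s * t / t1; set b := (1 - s) * t / t2.
have t_gt0 : 0 < t by rewrite invr_gt0; lra.
have t_lt1 : t < 1 by rewrite invf_lt1 //; lra.
have a_ge0 : 0 <= a by rewrite divr_ge0 ?mulr_ge0 ?(ltW t_gt0) ?(ltW t1_gt0).
have b_ge0 : 0 <= b by rewrite divr_ge0 ?mulr_ge0 ?subr_ge0 ?(ltW t_gt0) ?(ltW t2_gt0).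
have t1_neq0 : t1 != 0 by rewrite gt_eqF.
have t2_neq0 : t2 != 0 by rewrite gt_eqF.
have a_t1 : a * t1 = t * s by rewrite /a mulfVK // mulrC.
have b_t2 : b * t2 = t * (1 - s) by rewrite /b mulfVK // mulrC.
have ab1 : a + b = 1.
  rewrite -(mulfV (lt0r_neq0 (lt_trans ltr01 K_gt1))) /a /b /t /K; ring.
have t_split : a * (1 - t1) + b * (1 - t2) = 1 - t.
  by rewrite !mulrBr !mulr1 a_t1 b_t2; lra.
apply/weight_setP; first by rewrite ltW.
exists ((a * (1 - t1) + b * (1 - t2))^-1 *: ((a * (1 - t1)) *: z1 + (b * (1 - t2)) *: z2)).
  apply: convex_subset_wmean => //; rewrite ?t_split ?subr_gt0 //.
    by rewrite mulr_ge0 // subr_ge0 ltW.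
  by rewrite mulr_ge0 // subr_ge0 ltW.
rewrite t_split scalerA divff ?subr_eq0 1?eq_sym ?lt_eqF // scale1r.
have -> : y = a *: y + b *: y by rewrite -scalerDl ab1 scale1r.
by rewrite {1}y_eq1 y_eq2 !scalerDr !scalerA a_t1 b_t2 addrACA.
Qed.

Lemma inv_weight_le_harmonic (x1 x2 : V) (s t1 t2 : R) : 0 <= s <= 1 ->
  0 < t1 -> 0 < t2 -> weight_set x1 t1 -> weight_set x2 t2 ->
  1 / weight Z y (s *: x1 + (1 - s) *: x2) <= s / t1 + (1 - s) / t2.
Proof.
move=> s01 t1_gt0 t2_gt0 W1 W2.
have [/andP[_ t1_lt1] /andP[_ t2_lt1]] := (W1.1, W2.1).
have K_gt0 := lt_trans ltr01 (harmonic_gt1 s01 t1_gt0 t1_lt1 t2_gt0 t2_lt1).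
have invK_le := le_weight (harmonic_weight_set s01 t1_gt0 t2_gt0 W1 W2).
have w_gt0 : 0 < weight Z y (s *: x1 + (1 - s) *: x2).
  by apply: lt_le_trans invK_le; rewrite invr_gt0.
by rewrite mul1r -[leRHS]invrK lef_pV2 ?posrE ?invr_gt0.
Qed.

End Weight.

Theorem lemma1 (R : realType) (V : lmodType R) (Z : set V) (y : V)
  (hZ : convex_subset Z) (hy : Z y) (x1 x2 : V) (hx1 : Z x1) (hx2 : Z x2)
  (h1 : leC Z x1 y) (h2 : leC Z x2 y) (s : R) (hs : 0 <= s <= 1) :
  1 / weight Z y (s *: x1 + (1 - s) *: x2)
    <= s / weight Z y x1 + (1 - s) / weight Z y x2.
Proof.
have [s_ge0 s_le1] := andP hs.
set w := 1 / weight Z y (s *: x1 + (1 - s) *: x2).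
have bound_t2 t2 : weight_set Z y x2 t2 -> 0 < t2 ->
    w - (1 - s) / t2 <= s / weight Z y x1.
  move=> W2 t2_gt0; apply: le_div_sup; rewrite ?weight_gt0 //.
    by exists 0; exact: weight_set0.
  move=> t1 W1 t1_gt0.
  by have := inv_weight_le_harmonic hZ hs t1_gt0 t2_gt0 W1 W2; rewrite -/w; lra.
suff : w - s / weight Z y x1 <= (1 - s) / weight Z y x2 by lra.
apply: le_div_sup; rewrite ?weight_gt0 ?subr_ge0 //.
  by exists 0; exact: weight_set0.
by move=> t2 W2 t2_gt0; have := bound_t2 t2 W2 t2_gt0; lra.
Qed.
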